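(* There exists $N_0$ such that for every integer $n>N_0$, \[ b_{sn+s-1}<b_{sn+s-2}<\cdots<b_{sn+1}<b_n . \] Moreover $b_n\le b_{sn}$ for every $n\ge1$, and $b_n=b_{sn}$ (for any, equivalently all, $n\ge1$) if and only if $h(0)=0$.
   Context: Fix integers $p\ge 3$ and $2\le s<p$, and a set $A\subset\{0,1,\dots,p-1\}$ with $\#A=s$. Let $h:\{0,1,\dots,s-1\}\to A$ be the unique strictly increasing bijection. For a positive integer $n$ with base-$s$ expansion $n=\sum_{i=0}^k\varepsilon_i s^i$ ($\varepsilon_i\in\{0,\dots,s-1\}$, $\varepsilon_k\ne 0$), put $a_n=\sum_{i=0}^k h(\varepsilon_i)p^i$. Let $b_n=a_n/n^{\log_s p}$ for $n\ge1$. *)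

From mathcomp Require Import all_boot.
From Stdlib Require Import Reals.
Set Implicit Arguments. Unset Strict Implicit. Unset Printing Implicit Defensive.

(* a_aux k n : replace the base-s digits of n by their h-images and read the
   result in base p (using at most k digits; fuel). *)
Fixpoint a_aux (s p : nat) (h : nat -> nat) (k n : nat) : nat :=
  match k with
  | 0 => 0
  | k'.+1 => if n == 0 then 0 else h (n %% s) + p * a_aux s p h k' (n %/ s)
  end.

(* a_n = sum_i h(eps_i) p^i where n = sum_i eps_i s^i (eps_k <> 0). n digits of
   fuel suffice since n has at most n base-s digits (s >= 2). *)
Definition a_seq (s p : nat) (h : nat -> nat) (n : nat) : nat := a_aux s p h n n.

Definition b_seq (s p : nat) (h : nat -> nat) (n : nat) : R :=
  Rdiv (INR (a_seq s p h n)) (Rpower (INR n) (Rdiv (ln (INR p)) (ln (INR s)))).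

(* Reading the last base-s digit gives a_(sn+j) = h(j) + p a_n, and since
   (sn)^alpha = p n^alpha for alpha = log_s p, this yields
   b_(sn) = b_n + h(0)/(sn)^alpha and b_n = p a_n/(sn)^alpha.  Comparing two
   consecutive terms b_(y+1) = c/(y+1)^alpha and b_y = d/y^alpha only needs
   c y < d (y+1) because alpha >= 1; with c, d of the form h(i) + p a_n and
   y = sn + j this reduces to h(j+1) (sn + j) < p a_n.  That holds for large n
   because a_n >= p^k where k = floor(log_s n), and p^k outgrows s^(k+2) > s(n+1). *)
From Stdlib Require Import Reals Lia Lra.
From mathcomp Require Import all_boot zify.

Lemma shift_mul_lt (u v w y : nat) : u * y < w -> (u + w) * y < (v + w) * y.+1.
Proof. nia. Qed.

Lemma expn_growth (s p k : nat) : s < p -> s ^ k * (s + k) <= p ^ k * s.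
Proof.
move=> hsp; elim: k => [|k IH]; first by rewrite addn0 !mul1n.
rewrite !expnS; move: IH; set X := s ^ k; set Y := p ^ k => IH; nia.
Qed.

Lemma expn_succ2_le (s p k : nat) : 0 < s -> s < p -> s ^ 3 <= k -> s ^ k.+2 <= p ^ k.
Proof.
move=> s_gt0 hsp hk.
have hsk : s ^ k * s ^ 3 <= s ^ k * (s + k) by rewrite leq_mul2l; lia.
rewrite -(leq_pmul2r s_gt0); apply: leq_trans (expn_growth s p k hsp).
by apply: leq_trans hsk; rewrite !expnS; lia.
Qed.

Section DigitMap.

Variables (s p : nat) (h : nat -> nat).
Hypothesis s_gt1 : 1 < s.
Local Notation a := (a_seq s p h).

Lemma a_aux_fuel k k' n : n <= k -> n <= k' -> a_aux s p h k n = a_aux s p h k' n.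
Proof.
elim: k k' n => [|k IH] [|k'] n //= hk hk'; try by have -> : n = 0 by lia.
case: eqP => // /eqP n0; congr (_ + p * _).
have q_lt : n %/ s < n by rewrite ltn_Pdiv // lt0n.
by apply: IH; lia.
Qed.

Lemma a_seq_rec n : 0 < n -> a n = h (n %% s) + p * a (n %/ s).
Proof.
case: n => // n _; rewrite /a_seq /=; congr (_ + p * _).
have q_lt : n.+1 %/ s < n.+1 by rewrite ltn_Pdiv.
by apply: a_aux_fuel; lia.
Qed.

Lemma a_seq_digit n j : 0 < n -> j < s -> a (s * n + j) = h j + p * a n.
Proof.
move=> n_gt0 hj; rewrite a_seq_rec; last by lia.
by rewrite mulnC modnMDl modn_small // divnMDl ?divn_small ?addn0 //; lia.
Qed.

Hypothesis s_lt_p : s < p.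
Hypothesis h_pos : forall i, 0 < i < s -> 0 < h i.

Lemma a_seq_gt0 n : 0 < n -> 0 < a n.
Proof.
elim: n {-2}n (leqnn n) => [|m IH] n hn n_gt0; first lia.
rewrite a_seq_rec //.
have [n_lt_s | s_le_n] := ltnP n s.
  have : 0 < h n by apply: h_pos; lia.
  by rewrite modn_small //; lia.
have q_lt : n %/ s < n by rewrite ltn_Pdiv.
have q_gt0 : 0 < n %/ s by rewrite divn_gt0; lia.
have a_q_gt0 : 0 < a (n %/ s) by apply: IH; lia.
nia.
Qed.

Lemma expn_le_a_seq k n : s ^ k <= n -> p ^ k <= a n.
Proof.
elim: k n => [|k IH] n hn; first exact: a_seq_gt0.
have hdiv : s ^ k <= n %/ s by rewrite leq_divRL -?expnSr //; lia.
rewrite a_seq_rec; last by have := expn_gt0 s k.+1; lia.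
by rewrite expnS; have := IH _ hdiv; nia.
Qed.

Lemma a_seq_eventually_ge : exists N, forall n, N < n -> s * n.+1 <= a n.
Proof.
exists (s ^ s ^ 3) => n hn; set k := trunc_log s n.
have hk : s ^ 3 <= k by apply: trunc_log_max; lia.
have n_lt : n < s ^ k.+1 by apply: trunc_log_ltn.
have a_ge : p ^ k <= a n by apply: expn_le_a_seq; apply: trunc_logP; lia.
have p_ge := expn_succ2_le s p k (ltnW s_gt1) s_lt_p hk.
have : s * n.+1 <= s ^ k.+2 by rewrite (expnS s k.+1) leq_mul2l n_lt orbT.
lia.
Qed.

End DigitMap.

Lemma INR_ltn (m n : nat) : m < n -> Rlt (INR m) (INR n).
Proof. by move=> /ltP; apply: lt_INR. Qed.

Section Ratios.

Local Open Scope R_scope.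

Lemma Rdiv_lt_cross (a b c d : R) : 0 < b -> 0 < d -> a * d < c * b -> a / b < c / d.
Proof.
move=> b_gt0 d_gt0 hcross; apply: (Rmult_lt_reg_r (b * d)); first by nra.
by replace (a / b * (b * d)) with (a * d) by (field; lra);
   replace (c / d * (b * d)) with (c * b) by (field; lra).
Qed.

Lemma ratio_Rpower_lt (al : R) (c d y : nat) : 1 <= al -> (0 < y)%N ->
  (c * y < d * y.+1)%N -> INR c / Rpower (INR y.+1) al < INR d / Rpower (INR y) al.
Proof.
move=> al_ge1 y_gt0 hcd.
have hy : 0 < INR y by apply/lt_0_INR/ltP.
have hy1 : INR y < INR y.+1 by apply: INR_ltn.
have split_pow x : 0 < x -> Rpower x al = x * Rpower x (al - 1).
  by move=> x_gt0; rewrite -{2}(Rpower_1 x x_gt0) -Rpower_plus; congr Rpower; ring.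
set P0 := Rpower (INR y) (al - 1); set P1 := Rpower (INR y.+1) (al - 1).
have P_le : P0 <= P1 by apply: Rle_Rpower_l; lra.
have P0_gt0 : 0 < P0 by apply: exp_pos.
have hcdR : INR c * INR y < INR d * INR y.+1 by rewrite -!mult_INR; apply: INR_ltn.
have d_ge0 : 0 <= INR d by apply: pos_INR.
rewrite (split_pow _ hy) (split_pow (INR y.+1)) -/P0 -/P1; last lra.
have dy_ge0 : 0 <= INR d * INR y.+1 by nra.
by apply: Rdiv_lt_cross; nra.
Qed.

Variables (s p : nat) (h : nat -> nat).
Hypotheses (s_gt1 : (1 < s)%N) (s_lt_p : (s < p)%N).
Local Notation a := (a_seq s p h).
Local Notation b := (b_seq s p h).
Local Notation alpha := (ln (INR p) / ln (INR s)).

Lemma ln_s_gt0 : 0 < ln (INR s).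
Proof. by rewrite -ln_1; apply: ln_increasing; [lra | exact: (INR_ltn 1 s s_gt1)]. Qed.

Lemma alpha_ge1 : 1 <= alpha.
Proof.
have hs := ln_s_gt0; have hs1 : 1 < INR s := INR_ltn 1 s s_gt1.
have hps : ln (INR s) < ln (INR p) by apply: ln_increasing; [lra | exact: INR_ltn].
apply: (Rmult_le_reg_r (ln (INR s))) => //.
by rewrite Rmult_1_l /Rdiv Rmult_assoc Rinv_l ?Rmult_1_r; lra.
Qed.

Lemma Rpower_alpha_mul n : (0 < n)%N ->
  Rpower (INR (s * n)) alpha = INR p * Rpower (INR n) alpha.
Proof.
move=> n_gt0; have ln_s := ln_s_gt0.
have hs : 0 < INR s by apply/lt_0_INR/ltP; lia.
have hn : 0 < INR n by apply/lt_0_INR/ltP.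
have hp : 0 < INR p by apply/lt_0_INR/ltP; lia.
rewrite mult_INR -Rpower_mult_distr //; congr (_ * _).
by rewrite /Rpower; replace (alpha * ln (INR s)) with (ln (INR p)) by (field; lra); rewrite exp_ln.
Qed.

Lemma b_seq_scaled n : (0 < n)%N -> b n = INR (p * a n) / Rpower (INR (s * n)) alpha.
Proof.
move=> n_gt0; have hp : 0 < INR p by apply/lt_0_INR/ltP; lia.
have pow_gt0 : 0 < Rpower (INR n) alpha by apply: exp_pos.
by rewrite /b_seq Rpower_alpha_mul // mult_INR; field; lra.
Qed.

Lemma b_seq_mul_base n : (0 < n)%N ->
  b (s * n) = b n + INR (h 0) / Rpower (INR (s * n)) alpha.
Proof.
move=> n_gt0; have := a_seq_digit s p h s_gt1 n 0 n_gt0 (ltnW s_gt1).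
rewrite addn0 [b n]b_seq_scaled // /b_seq => ->.
have pow_gt0 : 0 < Rpower (INR (s * n)) alpha by apply: exp_pos.
by rewrite plus_INR; field; lra.
Qed.

Lemma b_seq_le_mul_base n : (0 < n)%N -> b n <= b (s * n).
Proof.
move=> n_gt0; rewrite b_seq_mul_base //.
have h0_term : 0 <= INR (h 0) / Rpower (INR (s * n)) alpha.
  by apply: Rmult_le_pos; [apply: pos_INR | apply/Rlt_le/Rinv_0_lt_compat/exp_pos].
lra.
Qed.

Lemma b_seq_eq_mul_base n : (0 < n)%N -> b n = b (s * n) <-> h 0 = 0%N.
Proof.
move=> n_gt0; rewrite b_seq_mul_base //.
have pow_gt0 : 0 < Rpower (INR (s * n)) alpha by apply: exp_pos.
split => [E | ->]; last by rewrite /=; field; lra.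
apply: INR_eq; have : INR (h 0) / Rpower (INR (s * n)) alpha = 0 by lra.
by case/Rmult_integral => // /Rinv_neq_0_compat; lra.
Qed.

Hypothesis h_lt_p : forall i, (i < s)%N -> (h i < p)%N.

Lemma b_seq_next_digit_lt n j v : (0 < n)%N -> (s * n.+1 <= a n)%N -> (j.+1 < s)%N ->
  b (s * n + j.+1) < INR (v + p * a n) / Rpower (INR (s * n + j)) alpha.
Proof.
move=> n_gt0 a_large hj; rewrite /b_seq a_seq_digit // addnS.
apply: ratio_Rpower_lt; [exact: alpha_ge1 | lia | apply: shift_mul_lt].
have := h_lt_p _ hj; nia.
Qed.

Lemma b_seq_digit_lt n j : (0 < n)%N -> (s * n.+1 <= a n)%N -> (j.+1 < s)%N ->
  b (s * n + j.+1) < b (s * n + j).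
Proof.
move=> n_gt0 a_large hj; rewrite {2}/b_seq a_seq_digit //; last lia.
exact: b_seq_next_digit_lt.
Qed.

Lemma b_seq_first_digit_lt n : (0 < n)%N -> (s * n.+1 <= a n)%N -> b (s * n + 1) < b n.
Proof.
move=> n_gt0 a_large; have := b_seq_next_digit_lt n 0 0 n_gt0 a_large s_gt1.
by rewrite add0n addn0 -b_seq_scaled.
Qed.

End Ratios.

Theorem mainTheorem7 (p s : nat) (A : seq nat) (h : nat -> nat)
  (hp : 3 <= p) (hs2 : 2 <= s) (hsp : s < p)
  (hAuniq : uniq A) (hAsize : size A = s) (hAp : all (fun x => x < p) A)
  (hmono : forall i j, i < j -> j < s -> h i < h j)
  (hinA : forall i, i < s -> h i \in A)
  (hsurj : forall x, x \in A -> exists2 i, i < s & h i = x) :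
  (exists N0 : nat, forall n : nat, N0 < n ->
     (forall j : nat, 1 <= j -> j < s - 1 ->
        Rlt (b_seq s p h (s * n + j.+1)) (b_seq s p h (s * n + j)))
     /\ Rlt (b_seq s p h (s * n + 1)) (b_seq s p h n))
  /\ (forall n : nat, 1 <= n -> Rle (b_seq s p h n) (b_seq s p h (s * n)))
  /\ (forall n : nat, 1 <= n -> (b_seq s p h n = b_seq s p h (s * n) <-> h 0 = 0)).
Proof.
have h_pos i : 0 < i < s -> 0 < h i by case/andP=> i_gt0 /(hmono _ _ i_gt0); lia.
have h_lt_p i : i < s -> h i < p by move=> /hinA /(allP hAp).
have [N a_large] := a_seq_eventually_ge s p h hs2 hsp h_pos.
split; [exists N => n hn; split | split => n n_gt0].
- by move=> j _ hj; apply: b_seq_digit_lt => //; [lia | apply: a_large | lia].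
- by apply: b_seq_first_digit_lt => //; [lia | apply: a_large].
- exact: b_seq_le_mul_base.
- exact: b_seq_eq_mul_base.
Qed.
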